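(* Let $T(n)=(3n+1)/2^{v_2(3n+1)}$ be the Syracuse map. For odd $n$ let $L(n)=v_2(n+1)-1$. Fix $\ell\ge 0$. Among the odd positive integers $n$ with $L(n)=\ell$, the natural density (relative to that set) of those with $T^{\ell+1}(n)<n$ equals $$p_\ell=2^{-\lfloor(\log_2 3-1)(\ell+1)\rfloor}.$$
   Context: $v_2$ is the $2$-adic valuation; $T^j$ the $j$-th iterate. *)

From Stdlib Require Import Reals Arith List.
Open Scope R_scope.

(* 2-adic valuation of a natural number (convention: v2 0 = 0). *)
Fixpoint v2_aux (fuel m : nat) : nat :=
  match fuel with
  | O => O
  | S f => if Nat.eqb m 0 then O
           else if Nat.even m then S (v2_aux f (Nat.div m 2)) else O
  end.
Definition v2 (m : nat) : nat := v2_aux m m.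

Definition syr (n : nat) : nat :=
  Nat.div (3 * n + 1) (2 ^ v2 (3 * n + 1)).

Definition Lval (n : nat) : Z := (Z.of_nat (v2 (n + 1)) - 1)%Z.

Definition count_upto (P : nat -> bool) (N : nat) : nat :=
  length (filter P (seq 1 N)).

Definition rel_density (A B : nat -> bool) (d : R) : Prop :=
  Un_cv (fun N => INR (count_upto (fun n => andb (B n) (A n)) N)
                  / INR (count_upto B N)) d.

Definition log2 (x : R) : R := ln x / ln 2.

(* Write n + 1 = 2^(l+1) m with m odd.  The first l steps of T divide by exactly 2, so
   T^l(n) = 2 3^l m - 1 and T^(l+1)(n) = (3^(l+1) m - 1) / 2^k with k = v2(3^(l+1) m - 1).
   Let F be the integer part of (log2 3 - 1)(l+1), so that 2^(l+1+F) < 3^(l+1) < 2^(l+2+F).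
   Then T^(l+1)(n) < n forces k > F, and k > F gives T^(l+1)(n) < n as soon as n >= 3^(l+1).
   As 3^(l+1) is invertible modulo 2^(F+1), the condition k > F puts m in one residue class
   modulo 2^(F+1), i.e. n in one residue class modulo 2^(l+F+2), while L(n) = l is a single
   residue class modulo 2^(l+2).  The ratio of the two densities is 2^-F. *)

From Stdlib Require Import Reals ZArith List Lia Lra.
From Coquelicot Require Import Coquelicot.

Open Scope nat_scope.

Lemma v2_aux_pow2_odd f e o :
  2 ^ e * (2 * o + 1) <= f -> v2_aux f (2 ^ e * (2 * o + 1)) = e.
Proof.
  revert e. induction f as [|f IH]; intros e Hf;
    pose proof (Nat.pow_nonzero 2 e ltac:(lia)); [nia|].
  cbn [v2_aux].
  replace (Nat.eqb (2 ^ e * (2 * o + 1)) 0) with false by (symmetry; apply Nat.eqb_neq; nia).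
  destruct e as [|e].
  - replace (2 ^ 0 * (2 * o + 1)) with (1 + 2 * o) by (simpl; lia).
    now rewrite Nat.even_add_mul_2.
  - rewrite Nat.pow_succ_r', <- Nat.mul_assoc, Nat.mul_comm, Nat.even_mul, Bool.orb_true_r.
    rewrite Nat.div_mul by lia. f_equal. apply IH.
    rewrite Nat.pow_succ_r' in Hf. nia.
Qed.

Lemma v2_pow2_odd e o : v2 (2 ^ e * (2 * o + 1)) = e.
Proof. apply v2_aux_pow2_odd. lia. Qed.

Lemma pow2_odd_decomposition x : 0 < x -> exists e o, x = 2 ^ e * (2 * o + 1).
Proof.
  induction x as [x IH] using lt_wf_ind. intro Hx.
  destruct (Nat.Even_or_Odd x) as [[y Hy]|[y Hy]].
  - destruct (IH y ltac:(lia) ltac:(lia)) as [e [o Heo]].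
    exists (S e), o. rewrite Nat.pow_succ_r'. lia.
  - exists 0, y. simpl. lia.
Qed.

Lemma syr_odd_part n k o : 3 * n + 1 = 2 ^ k * (2 * o + 1) -> syr n = 2 * o + 1.
Proof.
  intro H. unfold syr. rewrite H, v2_pow2_odd, Nat.mul_comm, Nat.div_mul; [easy|].
  apply Nat.pow_nonzero. lia.
Qed.

Lemma iter_syr_doubling j c :
  1 <= c -> Nat.iter j syr (2 ^ j * (2 * c) - 1) = 3 ^ j * (2 * c) - 1.
Proof.
  revert c. induction j as [|j IH]; intros c Hc; [easy|].
  rewrite Nat.iter_succ_r, Nat.pow_succ_r'.
  pose proof (Nat.pow_nonzero 2 j ltac:(lia)).
  rewrite (syr_odd_part _ 1 (3 * 2 ^ j * c - 1)) by (simpl; nia).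
  replace (2 * (3 * 2 ^ j * c - 1) + 1) with (2 ^ j * (2 * (3 * c)) - 1) by nia.
  rewrite IH by lia. rewrite Nat.pow_succ_r'. lia.
Qed.

Lemma iter_syr_pred_pow2 l m k o : 1 <= m -> 3 ^ S l * m - 1 = 2 ^ k * (2 * o + 1) ->
  Nat.iter (S l) syr (2 ^ S l * m - 1) = 2 * o + 1.
Proof.
  intros Hm H.
  replace (2 ^ S l * m) with (2 ^ l * (2 * m)) by (rewrite Nat.pow_succ_r'; ring).
  rewrite Nat.iter_succ, iter_syr_doubling by lia.
  apply (syr_odd_part _ (S k)).
  pose proof (Nat.pow_nonzero 3 l ltac:(lia)).
  rewrite Nat.pow_succ_r' in *. nia.
Qed.

Lemma no_descent_of_small_valuation B A P O m :
  B * P < A -> P * O = A * m - 1 -> 1 <= m -> 1 <= P -> B * m - 1 <= O.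
Proof. intros. nia. Qed.

(* If O >= B m - 1, then P O = A m - 1 and B P > A first give P > m, and then
   A m - 1 >= (m + 1)(B m - 1) gives A >= B m. *)
Lemma descent_of_large_valuation B A P O m :
  A < B * P -> P * O = A * m - 1 -> 1 <= A -> 1 <= m -> A <= B * m - 1 -> O < B * m - 1.
Proof.
  intros HBP HO HA Hm HAn.
  set (n := B * m - 1) in *. assert (Hn : B * m = n + 1) by lia.
  apply Nat.nle_gt. intro HnO.
  assert (HP : m + 1 <= P) by nia.
  assert (A * m >= m * n + B * m) by nia.
  nia.
Qed.

Lemma mod_eq_iff m M r : r < M -> (m mod M = r <-> exists j, m = M * j + r).
Proof.
  intro Hr. split.
  - intro E. exists (m / M). rewrite <- E. apply Nat.div_mod_eq.
  - intros [j ->]. symmetry. apply (Nat.mod_unique _ _ j); lia.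
Qed.

Lemma mod_mul_pred_iff n d M r : 0 < d -> 0 < r < M ->
  (n mod (d * M) = d * r - 1 <-> exists j, n + 1 = d * (M * j + r)).
Proof.
  intros Hd Hr. rewrite mod_eq_iff by nia.
  split; intros [j Hj]; exists j; nia.
Qed.

Lemma mod_mul_inverse_iff A c M m : (A * c) mod M = 1 ->
  ((A * m) mod M = 1 <-> m mod M = c mod M).
Proof.
  intro Hc. split; intro H.
  - rewrite <- (Nat.mul_1_l m), <- Hc, Nat.Div0.mul_mod_idemp_l.
    rewrite (Nat.mul_comm A c), <- Nat.mul_assoc, <- Nat.Div0.mul_mod_idemp_r, H.
    now rewrite Nat.mul_1_r.
  - now rewrite <- Nat.Div0.mul_mod_idemp_r, H, Nat.Div0.mul_mod_idemp_r.
Qed.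

Lemma odd_inverse_mod_pow2 A s : Nat.odd A = true ->
  exists u, 2 * u + 1 < 2 ^ S s /\ (A * (2 * u + 1)) mod 2 ^ S s = 1.
Proof.
  intro HA. apply Nat.odd_spec in HA as [t ->].
  induction s as [|s [u [Hu Hinv]]].
  - exists 0. split; [simpl; lia|]. symmetry. apply (Nat.mod_unique _ _ t); simpl; lia.
  - pose proof (Nat.div_mod_eq ((2 * t + 1) * (2 * u + 1)) (2 ^ S s)) as Hq.
    rewrite Hinv in Hq.
    set (q := (2 * t + 1) * (2 * u + 1) / 2 ^ S s) in Hq.
    rewrite !Nat.pow_succ_r' in *.
    destruct (Nat.Even_or_Odd q) as [[w Hw]|[w Hw]].
    + exists u. split; [lia|]. symmetry. apply (Nat.mod_unique _ _ w); nia.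
    + exists (u + 2 ^ s). split; [lia|]. symmetry.
      apply (Nat.mod_unique _ _ (w + t + 1)); nia.
Qed.

Lemma pow2_odd_succ_mod_pow2 k o s :
  (2 ^ k * (2 * o + 1) + 1) mod 2 ^ S s = 1 <-> s < k.
Proof.
  assert (H1 : 1 < 2 ^ S s) by (rewrite Nat.pow_succ_r'; pose proof (Nat.pow_nonzero 2 s); lia).
  split; intro H.
  - apply Nat.nle_gt. intro Hks.
    apply mod_eq_iff in H as [j Hj]; [|lia].
    replace (2 ^ S s) with (2 ^ k * (2 * 2 ^ (s - k))) in Hj
      by (rewrite <- Nat.pow_succ_r', <- Nat.pow_add_r; f_equal; lia).
    assert (2 * o + 1 = 2 * (2 ^ (s - k) * j)); [|lia].
    apply (Nat.mul_cancel_l _ _ (2 ^ k)); [apply Nat.pow_nonzero; lia|lia].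
  - symmetry. apply (Nat.mod_unique _ _ (2 ^ (k - S s) * (2 * o + 1))); [lia|].
    replace k with (S s + (k - S s)) at 1 by lia. rewrite Nat.pow_add_r. ring.
Qed.

Lemma pow3_between_pow2 a : 0 < a -> exists F, 2 ^ (a + F) < 3 ^ a < 2 ^ (a + S F).
Proof.
  intro Ha.
  assert (H3 : 0 < 3 ^ a) by (apply Nat.neq_0_lt_0, Nat.pow_nonzero; lia).
  destruct (Nat.log2_spec _ H3) as [Hlo Hhi]. set (L := Nat.log2 (3 ^ a)) in *.
  assert (HaL : a <= L).
  { apply Nat.lt_succ_r, (Nat.pow_lt_mono_r_iff 2); [lia|].
    apply (Nat.le_lt_trans _ (3 ^ a)); [apply Nat.pow_le_mono_l; lia|exact Hhi]. }
  assert (Hne : 2 ^ L <> 3 ^ a).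
  { intro E. apply (f_equal Nat.even) in E.
    rewrite !Nat.even_pow in E by lia. discriminate. }
  exists (L - a). replace (a + (L - a)) with L by lia.
  replace (a + S (L - a)) with (S L) by lia. lia.
Qed.

Definition has_L (l n : nat) : bool := Nat.odd n && Z.eqb (Lval n) (Z.of_nat l).

Definition descends (l n : nat) : bool := Nat.iter (S l) syr n <? n.

Lemma has_L_iff l n : has_L l n = true <-> exists t, n + 1 = 2 ^ S l * (2 * t + 1).
Proof.
  unfold has_L, Lval. rewrite Bool.andb_true_iff, Z.eqb_eq, Nat.odd_spec.
  pose proof (Nat.pow_nonzero 2 l ltac:(lia)).
  split.
  - intros [_ HL].
    destruct (pow2_odd_decomposition (n + 1) ltac:(lia)) as [e [o Heo]].
    rewrite Heo, v2_pow2_odd in HL. exists o. rewrite Heo. do 2 f_equal. lia.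
  - intros [t Ht]. split.
    + exists (2 ^ l * (2 * t + 1) - 1). rewrite Nat.pow_succ_r' in Ht. nia.
    + rewrite Ht, v2_pow2_odd. lia.
Qed.

Lemma has_L_mod l n : has_L l n = (n mod (2 ^ S l * 2) =? 2 ^ S l - 1).
Proof.
  replace (2 ^ S l - 1) with (2 ^ S l * 1 - 1) by lia.
  apply Bool.eq_iff_eq_true. rewrite has_L_iff, Nat.eqb_eq, mod_mul_pred_iff
    by (try apply Nat.neq_0_lt_0, Nat.pow_nonzero; lia).
  split; intros [j Hj]; exists j; lia.
Qed.

Lemma has_L_orbit l n t : n + 1 = 2 ^ S l * (2 * t + 1) ->
  exists k o, 3 ^ S l * (2 * t + 1) - 1 = 2 ^ k * (2 * o + 1) /\
              Nat.iter (S l) syr n = 2 * o + 1.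
Proof.
  intro Ht.
  assert (H3 : 3 <= 3 ^ S l)
    by (rewrite Nat.pow_succ_r'; pose proof (Nat.pow_nonzero 3 l); lia).
  destruct (pow2_odd_decomposition (3 ^ S l * (2 * t + 1) - 1) ltac:(nia)) as [k [o Hko]].
  exists k, o. split; [exact Hko|].
  replace n with (2 ^ S l * (2 * t + 1) - 1) by lia.
  apply (iter_syr_pred_pow2 _ _ k); [lia|exact Hko].
Qed.

Section DescentResidue.

Variables l F u : nat.
Hypothesis pow3_bounds : 2 ^ (S l + F) < 3 ^ S l < 2 ^ (S l + S F).
Hypothesis u_bound : 2 * u + 1 < 2 ^ S F.
Hypothesis u_inverse : (3 ^ S l * (2 * u + 1)) mod 2 ^ S F = 1.

Definition descent_residue (n : nat) : bool :=
  n mod (2 ^ S l * 2 ^ S F) =? 2 ^ S l * (2 * u + 1) - 1.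

Lemma descent_residue_iff n t k o :
  n + 1 = 2 ^ S l * (2 * t + 1) -> 3 ^ S l * (2 * t + 1) - 1 = 2 ^ k * (2 * o + 1) ->
  descent_residue n = true <-> F < k.
Proof.
  intros Ht Hko.
  pose proof (Nat.pow_nonzero 2 (S l) ltac:(lia)).
  assert (H3 : 1 <= 3 ^ S l) by (pose proof (Nat.pow_nonzero 3 (S l)); lia).
  unfold descent_residue. rewrite Nat.eqb_eq, mod_mul_pred_iff by lia.
  rewrite <- pow2_odd_succ_mod_pow2, <- Hko, Nat.sub_add by nia.
  rewrite (mod_mul_inverse_iff _ _ _ _ u_inverse), (Nat.mod_small (2 * u + 1)) by lia.
  rewrite mod_eq_iff by lia.
  split; intros [j Hj]; exists j; [|lia].
  apply (Nat.mul_cancel_l _ _ (2 ^ S l)); lia.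
Qed.

Lemma descent_residue_has_L n : descent_residue n = true -> has_L l n = true.
Proof.
  unfold descent_residue. rewrite Nat.eqb_eq, mod_mul_pred_iff, has_L_iff
    by (try apply Nat.neq_0_lt_0, Nat.pow_nonzero; lia).
  intros [j Hj]. exists (2 ^ F * j + u). rewrite Hj, (Nat.pow_succ_r' 2 F). ring.
Qed.

Lemma descends_descent_residue n :
  (has_L l n && descends l n)%bool = true -> descent_residue n = true.
Proof.
  rewrite Bool.andb_true_iff. unfold descends. rewrite Nat.ltb_lt, has_L_iff.
  intros [[t Ht] Hdesc].
  destruct (has_L_orbit _ _ _ Ht) as [k [o [Hko Horbit]]].
  apply (descent_residue_iff _ _ _ _ Ht Hko).
  apply Nat.nle_gt. intro Hk.
  assert (2 ^ S l * 2 ^ k < 3 ^ S l).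
  { rewrite <- Nat.pow_add_r. apply (Nat.le_lt_trans _ (2 ^ (S l + F))); [|lia].
    apply Nat.pow_le_mono_r; lia. }
  enough (2 ^ S l * (2 * t + 1) - 1 <= 2 * o + 1) by lia.
  pose proof (Nat.pow_nonzero 2 k).
  apply (no_descent_of_small_valuation _ (3 ^ S l) (2 ^ k)); lia.
Qed.

(* The bound on n is needed: for l = 0, n = 1 lies in the residue class and is fixed by T. *)
Lemma descent_residue_descends n :
  descent_residue n = true -> 3 ^ S l <= n -> (has_L l n && descends l n)%bool = true.
Proof.
  intros Hres Hn. pose proof (descent_residue_has_L _ Hres) as HL.
  rewrite HL. apply Nat.ltb_lt.
  apply has_L_iff in HL as [t Ht].
  destruct (has_L_orbit _ _ _ Ht) as [k [o [Hko Horbit]]].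
  apply (descent_residue_iff _ _ _ _ Ht Hko) in Hres.
  assert (3 ^ S l < 2 ^ S l * 2 ^ k).
  { rewrite <- Nat.pow_add_r. apply (Nat.lt_le_trans _ (2 ^ (S l + S F))); [lia|].
    apply Nat.pow_le_mono_r; lia. }
  rewrite Horbit. replace n with (2 ^ S l * (2 * t + 1) - 1) by lia.
  apply (descent_of_large_valuation _ (3 ^ S l) (2 ^ k)); try lia.
Qed.

End DescentResidue.

Lemma count_upto_S P N :
  count_upto P (S N) = count_upto P N + (if P (S N) then 1 else 0).
Proof.
  unfold count_upto. rewrite seq_S, filter_app, length_app. simpl.
  replace (N + 1) with (S N) by lia. now destruct (P (S N)).
Qed.

Lemma count_upto_ext P Q N : (forall n, P n = Q n) -> count_upto P N = count_upto Q N.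
Proof. intro H. induction N; [easy|]. now rewrite !count_upto_S, IHN, H. Qed.

Lemma count_upto_mono P Q N :
  (forall n, P n = true -> Q n = true) -> count_upto P N <= count_upto Q N.
Proof.
  intro H. induction N; [easy|]. rewrite !count_upto_S.
  specialize (H (S N)). destruct (P (S N)), (Q (S N)); lia.
Qed.

Lemma count_upto_le_add P Q L N :
  (forall n, L <= n -> Q n = true -> P n = true) -> count_upto Q N <= count_upto P N + L.
Proof.
  intro H. enough (count_upto Q N <= count_upto P N + Nat.min N L) by lia.
  induction N; [easy|]. rewrite !count_upto_S.
  specialize (H (S N)). destruct (P (S N)), (Q (S N)); try lia;
  (assert (S N < L) by (apply Nat.nle_gt; intro; discriminate (H ltac:(lia) eq_refl)); lia).
Qed.

Lemma count_upto_mod M r N : 0 < r < M ->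
  count_upto (fun n => n mod M =? r) N = N / M + (if r <=? N mod M then 1 else 0).
Proof.
  intro Hr. induction N as [|N IH].
  - rewrite Nat.Div0.div_0_l, Nat.Div0.mod_0_l. destruct (Nat.leb_spec r 0); [lia|easy].
  - rewrite count_upto_S, IH.
    pose proof (Nat.div_mod_eq N M) as E. pose proof (Nat.mod_upper_bound N M ltac:(lia)).
    destruct (Nat.eq_dec (S (N mod M)) M) as [Hwrap|Hwrap].
    + rewrite <- (Nat.mod_unique (S N) M (S (N / M)) 0),
        <- (Nat.div_unique (S N) M (S (N / M)) 0) by lia.
      destruct (Nat.leb_spec r (N mod M)), (Nat.leb_spec r 0), (Nat.eqb_spec 0 r); lia.
    + rewrite <- (Nat.mod_unique (S N) M (N / M) (S (N mod M))),
        <- (Nat.div_unique (S N) M (N / M) (S (N mod M))) by lia.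
      destruct (Nat.leb_spec r (N mod M)), (Nat.leb_spec r (S (N mod M))),
        (Nat.eqb_spec (S (N mod M)) r); lia.
Qed.

Open Scope R_scope.

Lemma count_upto_mod_error M r N : (0 < r < M)%nat ->
  Rabs (INR (count_upto (fun n => n mod M =? r) N) - INR N / INR M) <= 1.
Proof.
  intro Hr.
  assert (Hnat : (N <= M * count_upto (fun n => n mod M =? r) N + M /\
                  M * count_upto (fun n => n mod M =? r) N <= N + M)%nat).
  { rewrite count_upto_mod by lia.
    pose proof (Nat.div_mod_eq N M). pose proof (Nat.mod_upper_bound N M ltac:(lia)).
    destruct (r <=? N mod M); nia. }
  destruct Hnat as [Hlo Hhi]. apply le_INR in Hlo, Hhi.
  rewrite plus_INR, mult_INR in Hlo, Hhi.
  assert (HM : 0 < INR M) by (apply lt_0_INR; lia).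
  apply Rabs_le. split.
  - apply (Rmult_le_reg_l (INR M)); [exact HM|]. field_simplify; [lra|lra].
  - apply (Rmult_le_reg_l (INR M)); [exact HM|]. field_simplify; [lra|lra].
Qed.

Lemma is_lim_seq_bounded_error (x : nat -> R) (p C : R) :
  (forall N, Rabs (x N - INR N * p) <= C) -> is_lim_seq (fun N => x N / INR N) p.
Proof.
  intro Herr.
  assert (Hinv : is_lim_seq (fun N => C * / INR N) 0).
  { replace (Finite 0) with (Rbar_mult C (Rbar_inv p_infty)) by (simpl; f_equal; ring).
    apply is_lim_seq_scal_l, is_lim_seq_inv; [apply is_lim_seq_INR|discriminate]. }
  apply (is_lim_seq_le_le_loc (fun N => p - C * / INR N) _ (fun N => p + C * / INR N)).
  - exists 1%nat. intros N HN.
    assert (HN0 : 0 < INR N) by (apply lt_0_INR; lia).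
    specialize (Herr N). apply Rabs_le_between' in Herr.
    replace (x N / INR N) with (p + (x N - INR N * p) * / INR N) by (field; lra).
    pose proof (Rinv_0_lt_compat _ HN0). nra.
  - replace (Finite p) with (Finite (p - 0)) by (f_equal; ring).
    now apply is_lim_seq_minus'; [apply is_lim_seq_const|].
  - replace (Finite p) with (Finite (p + 0)) by (f_equal; ring).
    now apply is_lim_seq_plus'; [apply is_lim_seq_const|].
Qed.

Lemma rel_density_of_densities (A B : nat -> bool) (pAB pB : R) :
  is_lim_seq (fun N => INR (count_upto (fun n => andb (B n) (A n)) N) / INR N) pAB ->
  is_lim_seq (fun N => INR (count_upto B N) / INR N) pB -> pB <> 0 ->
  rel_density A B (pAB / pB).
Proof.
  intros HAB HB HpB. apply is_lim_seq_Reals.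
  generalize (is_lim_seq_div' _ _ _ _ HAB HB HpB). apply is_lim_seq_ext.
  intros [|N]; [unfold Rdiv; simpl; now rewrite !Rmult_0_l|].
  set (x := INR (count_upto _ (S N))). set (y := INR (count_upto B (S N))).
  destruct (Req_dec y 0) as [Hy|Hy].
  - rewrite Hy. unfold Rdiv. now rewrite Rmult_0_l, Rinv_0, !Rmult_0_r.
  - field. split; [exact Hy|apply not_0_INR; lia].
Qed.

Lemma Int_part_log2_three_halves a F : (2 ^ (a + F) <= 3 ^ a < 2 ^ (a + S F))%nat ->
  Int_part ((log2 3 - 1) * INR a) = Z.of_nat F.
Proof.
  intros [Hlo Hhi].
  apply le_INR in Hlo. apply lt_INR in Hhi. rewrite !pow_INR in Hlo, Hhi.
  replace (INR 2) with 2 in Hlo, Hhi by (simpl; ring).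
  replace (INR 3) with 3 in Hlo, Hhi by (simpl; ring).
  apply ln_le in Hlo; [|apply pow_lt; lra]. apply ln_increasing in Hhi; [|apply pow_lt; lra].
  rewrite !ln_pow, !plus_INR in Hlo, Hhi by lra. rewrite S_INR in Hhi.
  assert (Hln2 : 0 < ln 2) by (rewrite <- ln_1; apply ln_increasing; lra).
  assert (Hx : (log2 3 - 1) * INR a * ln 2 = INR a * ln 3 - INR a * ln 2)
    by (unfold log2; field; lra).
  unfold Int_part. rewrite <- (up_tech _ (Z.of_nat F)); [lia| |].
  - rewrite <- INR_IZR_INZ. apply (Rmult_le_reg_r (ln 2)); lra.
  - rewrite plus_IZR, <- INR_IZR_INZ. apply (Rmult_lt_reg_r (ln 2)); lra.
Qed.

Lemma has_L_density l :
  is_lim_seq (fun N => INR (count_upto (has_L l) N) / INR N) (/ INR (2 ^ S l * 2)).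
Proof.
  apply (is_lim_seq_bounded_error _ _ 1). intro N.
  rewrite (count_upto_ext _ _ N (has_L_mod l)).
  apply count_upto_mod_error.
  pose proof (Nat.pow_nonzero 2 l). rewrite Nat.pow_succ_r'. lia.
Qed.

Lemma descends_density l F u :
  (2 ^ (S l + F) < 3 ^ S l < 2 ^ (S l + S F))%nat -> (2 * u + 1 < 2 ^ S F)%nat ->
  (3 ^ S l * (2 * u + 1)) mod 2 ^ S F = 1%nat ->
  is_lim_seq (fun N => INR (count_upto (fun n => has_L l n && descends l n)%bool N) / INR N)
    (/ INR (2 ^ S l * 2 ^ S F)).
Proof.
  intros HF Hu Hinv.
  apply (is_lim_seq_bounded_error _ _ (INR (3 ^ S l) + 1)). intro N.
  assert (Hres : (0 < 2 ^ S l * (2 * u + 1) - 1 < 2 ^ S l * 2 ^ S F)%nat)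
    by (pose proof (Nat.pow_nonzero 2 l); rewrite Nat.pow_succ_r'; nia).
  pose proof (count_upto_mod_error _ _ N Hres) as Herr.
  pose proof (count_upto_mono _ _ N (descends_descent_residue l F u HF Hu Hinv)) as Hle.
  pose proof (count_upto_le_add _ _ (3 ^ S l) N
                (fun n Hn Hres => descent_residue_descends l F u HF Hu Hinv n Hres Hn)) as Hge.
  apply le_INR in Hle, Hge. rewrite plus_INR in Hge.
  apply Rabs_le_between' in Herr. apply Rabs_le_between'.
  fold (descent_residue l F u) in Herr. unfold Rdiv in Herr. lra.
Qed.

Theorem mainTheorem12 (l : nat) :
  rel_density
    (fun n => Nat.ltb (Nat.iter (S l) syr n) n)
    (fun n => andb (Nat.odd n) (Z.eqb (Lval n) (Z.of_nat l)))
    (powerRZ 2 (- Int_part ((log2 3 - 1) * INR (S l)))).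
Proof.
  destruct (pow3_between_pow2 (S l)) as [F HF]; [lia|].
  rewrite (Int_part_log2_three_halves (S l) F) by lia.
  destruct (odd_inverse_mod_pow2 (3 ^ S l) F) as [u [Hu Hinv]]; [now rewrite Nat.odd_pow|].
  replace (powerRZ 2 (- Z.of_nat F))
    with (/ INR (2 ^ S l * 2 ^ S F) / / INR (2 ^ S l * 2)).
  2:{ rewrite powerRZ_neg', <- pow_powerRZ, !mult_INR, !pow_INR.
      replace (INR 2) with 2 by (simpl; ring). simpl pow. field.
      split; apply pow_nonzero; lra. }
  change (rel_density (descends l) (has_L l)
            (/ INR (2 ^ S l * 2 ^ S F) / / INR (2 ^ S l * 2))).
  apply rel_density_of_densities.
  - exact (descends_density l F u HF Hu Hinv).
  - apply has_L_density.
  - apply Rinv_neq_0_compat, not_0_INR. pose proof (Nat.pow_nonzero 2 (S l)). lia.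
Qed.
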